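(* In the $\mathsf{CD}^\star$ model, there is a deterministic algorithm that computes a $(2,\log N)$-ruling set of the network using $O(N)$ time and $O(\log N)$ energy, and using only 1-bit messages.
   Context: Radio network: connected undirected graph $G$; synchronized slots; each vertex transmits, listens or idles per slot, transmit/listen costing one unit of energy (energy = maximum per-vertex number of such slots). The $\mathsf{CD}^\star$ model: a listener hears silence if no neighbor transmits, and if at least one neighbor transmits it receives the message of one of the transmitting neighbors (arbitrarily chosen if several transmit). Deterministic setting: vertices have distinct IDs in $\{1,\ldots,N\}$. An $(\alpha,\beta)$-ruling set of $G$ is a set $I$ of vertices such that (i) $\mathrm{dist}(u,v)\ge\alpha$ for all distinct $u,v\in I$, and (ii) for every vertex $u$ there is $v\in I$ with $\mathrm{dist}(u,v)\le\beta$. *)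

From mathcomp Require Import all_boot.
Set Implicit Arguments. Unset Strict Implicit. Unset Printing Implicit Defensive.

Inductive Action := Transmit of bool | Listen | Idle.

(* What a vertex observes in a slot: nothing (it transmitted or idled),
   silence, or a heard 1-bit message. *)
Inductive Obs := ONone | OSilence | OHeard of bool.

(* A deterministic algorithm: every vertex knows N and its own ID; its action
   in a slot is a function of N, its ID and its history of observations
   (whose length is the current slot index). *)
Record Algo := {
  act : nat -> nat -> seq Obs -> Action;
  rounds : nat -> nat;
  out : nat -> nat -> seq Obs -> bool }.

Definition is_transmit (a : Action) : bool :=
  if a is Transmit _ then true else false.
Definition payload (a : Action) : bool :=
  if a is Transmit b then b else false.
Definition is_active (a : Action) : bool :=
  if a is Idle then false else true.

Section Exec.
Variables (A : Algo) (N : nat) (T : finType) (e : rel T) (id : T -> nat).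
(* The CD* adversary: in slot r, a listener v whose set S of transmitting
   neighbours is nonempty receives the message of [adv r v S] (required to be
   in S, see [valid_adv]). *)
Variable adv : nat -> T -> {set T} -> T.

Fixpoint hist (r : nat) : T -> seq Obs :=
  match r with
  | 0 => fun _ => [::]
  | r'.+1 => fun v =>
      let a := fun u => act A N (id u) (hist r' u) in
      let o :=
        match a v with
        | Listen =>
            let S := [set u | e v u && is_transmit (a u)] in
            if S == set0 then OSilence else OHeard (payload (a (adv r' v S)))
        | _ => ONone
        end in
      rcons (hist r' v) o
  end.

Definition vertex_energy (v : T) : nat :=
  \sum_(r < rounds A N) is_active (act A N (id v) (hist r v)).
Definition energy : nat := \max_(v : T) vertex_energy v.

Definition output_set : {set T} :=
  [set v | out A N (id v) (hist (rounds A N) v)].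
End Exec.

Definition valid_adv (T : finType) (adv : nat -> T -> {set T} -> T) : Prop :=
  forall r v (S : {set T}), S != set0 -> adv r v S \in S.

Definition dist_le (T : finType) (e : rel T) (k : nat) (u v : T) : Prop :=
  exists p : seq T, [/\ path e u p, last u p = v & size p <= k].

Definition ruling_set (T : finType) (e : rel T) (alpha beta : nat)
    (I : {set T}) : Prop :=
  (forall u v, u \in I -> v \in I -> u != v -> ~ dist_le e alpha.-1 u v) /\
  (forall u, exists2 v, v \in I & dist_le e beta u v).

Definition connected_graph (T : finType) (e : rel T) : Prop :=
  forall u v : T, connect e u v.

From mathcomp Require Import all_boot.
From mathcomp Require Import zify.
Set Implicit Arguments. Unset Strict Implicit. Unset Printing Implicit Defensive.

(* The algorithm runs k = up_log 2 N slots; in slot r every vertex that has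
   heard nothing so far (a candidate) looks at bit r of its ID minus one:
   with bit 1 it listens, with bit 0 it transmits.  A listening candidate that
   hears something drops out, and the output is the set of final candidates.
   Two adjacent final candidates would have IDs differing in some bit r < k,
   and in slot r the one with bit 1 would have heard the other, so the output
   is independent.  A candidate that drops out in slot r has a neighbour that
   is still a candidate after slot r, so following these neighbours from any
   vertex reaches a final candidate within k steps.  Every vertex is active
   in at most k slots, and k <= N. *)

Definition heard (o : Obs) : bool := if o is OHeard _ then true else false.

Definition candidate (h : seq Obs) : bool := ~~ has heard h.

Definition id_bit (i r : nat) : bool := odd (i.-1 %/ 2 ^ r).

Definition ruling_act (N i : nat) (h : seq Obs) : Action :=
  if (size h < up_log 2 N) && candidate h then
    (if id_bit i (size h) then Listen else Transmit true)
  else Idle.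

Definition ruling_algo : Algo :=
  {| act := ruling_act; rounds := fun N => up_log 2 N;
     out := fun _ _ h => candidate h |}.

Lemma eq_from_bits k x y : x < 2 ^ k -> y < 2 ^ k ->
  (forall r, r < k -> odd (x %/ 2 ^ r) = odd (y %/ 2 ^ r)) -> x = y.
Proof.
elim: k x y => [|k IHk] x y; first by rewrite expn0; case: x; case: y.
rewrite expnS => ltx lty eq_bits.
have := eq_bits 0 isT; rewrite !expn0 !divn1 => eq_odd.
have eq_half : x./2 = y./2.
  apply: IHk; rewrite -?divn2; [lia | lia |].
  by move=> r ltrk; have := eq_bits r.+1 ltrk; rewrite expnS !divnMA !divn2.
by rewrite -(odd_double_half x) -(odd_double_half y) eq_odd eq_half.
Qed.

Lemma exists_neq_id_bit N i j : 1 <= i <= N -> 1 <= j <= N -> i != j ->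
  exists2 r, r < up_log 2 N & id_bit i r != id_bit j r.
Proof.
move=> rng_i rng_j neq_ij.
suff /existsP[r neq_r] : [exists r : 'I_(up_log 2 N), id_bit i r != id_bit j r].
  by exists r.
apply: contraR neq_ij => /existsPn eq_bits; apply/eqP.
have := up_logP N (isT : 1 < 2); set k := up_log 2 N => leNk.
suff : i.-1 = j.-1 by lia.
apply: (@eq_from_bits k); [lia | lia |].
by move=> r ltrk; apply/eqP; have := eq_bits (Ordinal ltrk); rewrite negbK.
Qed.

Section Walks.
Variables (T : finType) (e : rel T).

Lemma dist_le_cons d v u w : e v u -> dist_le e d u w -> dist_le e d.+1 v w.
Proof. by move=> evu [p [pth lst sz]]; exists (u :: p); rewrite /= evu. Qed.

Lemma dist_le_weaken d d' v w : d <= d' -> dist_le e d v w -> dist_le e d' v w.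
Proof. by move=> led [p [pth lst sz]]; exists p; split=> //; apply: leq_trans led. Qed.

Lemma dist_le1_edge u v : u != v -> dist_le e 1 u v -> e u v.
Proof.
move=> neq_uv [[|w [|? ?]] [//= pth lst _]]; first by rewrite lst eqxx in neq_uv.
by rewrite -lst; case/andP: pth.
Qed.

End Walks.

Section Execution.
Variables (N : nat) (T : finType) (e : rel T) (id : T -> nat).
Variable adv : nat -> T -> {set T} -> T.

Local Notation k := (up_log 2 N).
Local Notation hist_at := (hist ruling_algo N e id adv).
Local Notation cand r v := (candidate (hist_at r v)).

Lemma size_hist r v : size (hist_at r v) = r.
Proof. by elim: r v => [|r IHr] v //=; rewrite size_rcons IHr. Qed.

Lemma candidate_step r v : r < k ->
  cand r.+1 v = cand r v &&
    (id_bit (id v) r ==> ~~ [exists u, [&& e v u, cand r u & ~~ id_bit (id u) r]]).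
Proof.
move=> ltrk /=; rewrite /candidate has_rcons negb_or andbC -/(candidate _).
rewrite [ruling_act N (id v) _]/ruling_act size_hist ltrk /=.
case: (cand r v) => //=; case: (id_bit (id v) r) => //=.
have transmitsE u : is_transmit (ruling_act N (id u) (hist_at r u)) =
    cand r u && ~~ id_bit (id u) r.
  by rewrite /ruling_act size_hist ltrk; case: (cand r u); case: (id_bit _ _).
under eq_finset => u do rewrite transmitsE.
case: eqP => [S0 | /eqP/set0Pn[u hu]] /=; symmetry.
- by apply/existsPn => u; apply/negP => hu; have := in_set0 u; rewrite -S0 inE hu.
- by rewrite inE in hu; apply/negbF/existsP; exists u.
Qed.

Lemma candidate_le r s v : r <= s -> cand s v -> cand r v.
Proof.
move/subnK <-; elim: (s - r) => [|d IHd] //=.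
by rewrite /candidate has_rcons negb_or => /andP[_ /IHd].
Qed.

Lemma listening_candidate_hears r u w : r < k -> e u w ->
  id_bit (id u) r -> ~~ id_bit (id w) r -> cand r w -> ~~ cand r.+1 u.
Proof.
move=> ltrk euw bu bw cw; rewrite candidate_step // bu /= negbK.
by apply/nandP; right; apply/existsP; exists w; rewrite euw cw bw.
Qed.

Lemma candidate_reaches_final d j v : j + d = k -> cand j v ->
  exists2 w, cand k w & dist_le e d v w.
Proof.
elim: d j v => [|d IHd] j v jdk cv.
  by exists v; [rewrite -jdk addn0 | exists [::]].
have ltjk : j < k by lia.
have jdk' : j.+1 + d = k by lia.
case cv1: (cand j.+1 v).
  have [w cw dvw] := IHd _ _ jdk' cv1.
  by exists w => //; apply: dist_le_weaken dvw.
move: cv1; rewrite candidate_step // cv /= => /negbT; rewrite negb_imply negbK.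
case/andP=> _ /existsP[u /and3P[evu cu bu]].
have cu1 : cand j.+1 u by rewrite candidate_step // cu (negbTE bu).
have [w cw duw] := IHd _ _ jdk' cu1.
by exists w => //; apply: dist_le_cons duw.
Qed.

Lemma energy_le : energy ruling_algo N e id adv <= k.
Proof.
apply/bigmax_leqP => v _; rewrite /vertex_energy /= -[X in _ <= X]card_ord.
by rewrite -sum1_card; apply: leq_sum => r _; apply: leq_b1.
Qed.

Hypotheses (e_sym : symmetric e) (id_inj : injective id).
Hypothesis id_range : forall v, 1 <= id v <= N.

Lemma final_candidates_nonadjacent u w : u != w -> cand k u -> cand k w -> ~~ e u w.
Proof.
move=> neq_uw cu cw; apply/negP => euw.
have neq_id : id u != id w by apply: contra neq_uw => /eqP/id_inj ->.
have [r ltrk neq_bit] := exists_neq_id_bit (id_range u) (id_range w) neq_id.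
have cand_r x : cand k x -> cand r x by apply: candidate_le; apply: ltnW.
have cand_r1 x : cand k x -> cand r.+1 x by apply: candidate_le.
case bu: (id_bit (id u) r) neq_bit => /= bw.
- by have := listening_candidate_hears ltrk euw bu bw (cand_r _ cw); rewrite cand_r1.
- have bw' : id_bit (id w) r by move: bw; rewrite negbK.
  have ewu : e w u by rewrite e_sym.
  by have := listening_candidate_hears ltrk ewu bw' (negbT bu) (cand_r _ cu); rewrite cand_r1.
Qed.

Lemma ruling_algo_ruling_set : ruling_set e 2 k (output_set ruling_algo N e id adv).
Proof.
split=> [u w | v].
- rewrite !inE => cu cw neq_uw /(dist_le1_edge neq_uw).
  exact/negP/final_candidates_nonadjacent.
- have [w cw dvw] := candidate_reaches_final (add0n k) (isT : cand 0 v).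
  by exists w; rewrite ?inE.
Qed.

End Execution.

Theorem lemma15 :
  exists (A : Algo) (c : nat),
    forall N : nat,
      rounds A N <= c * N + c /\
      forall (T : finType) (e : rel T) (id : T -> nat)
             (adv : nat -> T -> {set T} -> T),
        symmetric e -> irreflexive e -> connected_graph e ->
        injective id -> (forall v, 1 <= id v <= N) ->
        valid_adv adv ->
        energy A N e id adv <= c * up_log 2 N + c /\
        ruling_set e 2 (up_log 2 N) (output_set A N e id adv).
Proof.
exists ruling_algo, 1 => N; rewrite !mul1n; split.
  by rewrite (leq_trans _ (leq_addr _ _)) // up_log_min // ltnW // ltn_expl.
move=> T e id adv e_sym _ _ id_inj id_range _; split.
- exact: leq_trans (energy_le _ _ _ _) (leq_addr _ _).
- exact: ruling_algo_ruling_set.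
Qed.
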